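(* For any stationary process over a finite alphabet and every $L\ge2$, $$\mathbf{E}'(L)\le\mathbf{E}(L)\le\mathbf{E}.$$
   Context: $H(L)$ is the Shannon entropy (base 2) of $S_1\cdots S_L$, $H(0)=0$; $h_\mu(L)=H(L)-H(L-1)$; $h_\mu=\lim H(L)/L$; $\mathbf{E}=\sum_{L=1}^\infty[h_\mu(L)-h_\mu]$. Finite-$L$ estimates: $\mathbf{E}(L)=H(L)-L\,h_\mu(L)$; for even $L$, $\mathbf{E}'(L)=I[S_1\cdots S_{L/2};\,S_{L/2+1}\cdots S_L]$ (mutual information between the two halves of an $L$-block), and for odd $L$, $\mathbf{E}'(L)=\mathbf{E}'(L-1)$. *)

From HB Require Import structures.
From mathcomp Require Import all_boot all_order all_algebra.
From mathcomp Require Import all_classical all_reals all_analysis.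
Set Implicit Arguments. Unset Strict Implicit. Unset Printing Implicit Defensive.
Import Order.TTheory GRing.Theory Num.Theory numFieldNormedType.Exports.
Local Open Scope ring_scope.

Section Defs.
Variables (R : realType) (A : finType).

(* A stationary process over the finite alphabet A, given by its cylinder
   (word) probabilities: P w = Prob(S_1 ... S_|w| = w).  Kolmogorov
   consistency + shift invariance characterise a stationary measure. *)
Definition stationary_process (P : seq A -> R) : Prop :=
  [/\ forall w, 0 <= P w,
      P [::] = 1,
      forall w, P w = \sum_(a : A) P (rcons w a)
    & forall w, P w = \sum_(a : A) P (a :: w)  ].

Definition log2 (x : R) : R := ln x / ln 2.

Definition xlog2x (p : R) : R := if p == 0 then 0 else p * log2 p.

Definition block_entropy (P : seq A -> R) (L : nat) : R :=
  - \sum_(w : L.-tuple A) xlog2x (P w).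

Definition entropy_gain (P : seq A -> R) (L : nat) : R :=
  block_entropy P L - block_entropy P L.-1.

Definition entropy_rate (P : seq A -> R) : R :=
  limn (fun L : nat => block_entropy P L / L%:R).

Definition excess_entropy (P : seq A -> R) : \bar R :=
  (\sum_(1 <= L <oo) ((entropy_gain P L - entropy_rate P)%:E))%E.

Definition excess_entropy_L (P : seq A -> R) (L : nat) : R :=
  block_entropy P L - L%:R * entropy_gain P L.

Definition halves_mutual_info (P : seq A -> R) (m : nat) : R :=
  \sum_(x : m.-tuple A) \sum_(y : m.-tuple A)
    let pxy := P (x ++ y) in
    let px := \sum_(y' : m.-tuple A) P (x ++ y') in
    let py := \sum_(x' : m.-tuple A) P (x' ++ y) in
    if pxy == 0 then 0 else pxy * log2 (pxy / (px * py)).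

Definition excess_entropy'_L (P : seq A -> R) (L : nat) : R :=
  if odd L then halves_mutual_info P (L.-1)./2
  else halves_mutual_info P L./2.

End Defs.

From HB Require Import structures.
From mathcomp Require Import all_boot all_order all_algebra.
From mathcomp Require Import all_classical all_reals all_analysis.
From mathcomp Require Import lra ring zify.

Set Implicit Arguments.
Unset Strict Implicit.
Unset Printing Implicit Defensive.
Import Order.TTheory GRing.Theory Num.Theory numFieldNormedType.Exports.
Local Open Scope ring_scope.

(* Let H be the block entropy and h(k) = H(k) - H(k-1).  Consistency and
   stationarity make H nondecreasing with H(0) = 0, and the nonnegativity of
   I[S_1; S_(k+2) | S_2 ... S_(k+1)] (a log-sum inequality) makes H concave:
   h is nonincreasing from k = 1 on.  The rest uses only concavity:
   E(L) = H(L) - L h(L) is nondecreasing in L; E'(L) = 2 H(m) - H(2m) with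
   m = L/2, which is at most E(2m) because H(2m) - H(m) >= m h(2m); and the
   means H(n)/n decrease to h_mu, so h_mu <= h(k) for k >= 1 and the partial
   sum of the series E up to L is H(L) - L h_mu >= E(L). *)

Section TupleSum.
Variables (V : nmodType) (A : finType).

Definition tuple_sum n (F : seq A -> V) : V := \sum_(w : n.-tuple A) F w.

Lemma tuple_sum0 F : tuple_sum 0 F = F [::].
Proof.
rewrite /tuple_sum (eq_bigr (fun=> F [::])) => [|w _]; last by rewrite tuple0.
by rewrite sumr_const card_tuple expn0.
Qed.

Lemma tuple_sum_cons n F :
  tuple_sum n.+1 F = \sum_(a : A) tuple_sum n (fun w => F (a :: w)).
Proof.
rewrite /tuple_sum pair_big /=.
rewrite (reindex (fun p : A * n.-tuple A => [tuple of p.1 :: p.2])) //=.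
exists (fun t : n.+1.-tuple A => (thead t, [tuple of behead t])).
  by case=> a w _ /=; congr pair; apply: val_inj.
by move=> t _; rewrite [in RHS](tuple_eta t).
Qed.

Lemma tuple_sum_rcons n F :
  tuple_sum n.+1 F = tuple_sum n (fun w => \sum_(a : A) F (rcons w a)).
Proof.
elim: n F => [|n IH] F.
  rewrite tuple_sum_cons tuple_sum0.
  by apply: eq_bigr => a _; rewrite tuple_sum0.
by rewrite !tuple_sum_cons; apply: eq_bigr => a _; rewrite IH.
Qed.

Lemma tuple_sum_cat m n F :
  tuple_sum (m + n) F =
  tuple_sum m (fun x => tuple_sum n (fun y => F (x ++ y))).
Proof.
elim: m F => [|m IH] F; first by rewrite tuple_sum0.
by rewrite addSn !tuple_sum_cons; apply: eq_bigr => a _; rewrite IH.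
Qed.

Lemma tuple_sumD n F G :
  tuple_sum n (fun w => F w + G w) = tuple_sum n F + tuple_sum n G.
Proof. exact: big_split. Qed.

End TupleSum.

Lemma le_sum_summand {R : numDomainType} {I : finType} {F : I -> R} i :
  (forall k, 0 <= F k) -> F i <= \sum_k F k.
Proof. by move=> F0; rewrite (bigD1 i) //= lerDl sumr_ge0. Qed.

Lemma le0_of_natmul_bounded (R : archiRealFieldType) (x C : R) :
  (forall n, n%:R * x <= C) -> x <= 0.
Proof.
move=> bnd; rewrite leNgt; apply/negP => x_gt0.
have C_ge0 : 0 <= C by have := bnd 0%N; rewrite mul0r.
have := bnd (Num.truncn (C / x)).+1; rewrite -ler_pdivlMr // leNgt.
by rewrite (truncnS_gt (C / x)).
Qed.

Section XLnX.
Variable R : realType.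

Definition xlnx (p : R) : R := p * ln p.

Lemma xlnx0 : xlnx 0 = 0.
Proof. by rewrite /xlnx mul0r. Qed.

Lemma gibbs_term (r a b T : R) : 0 <= r -> r <= a -> r <= b -> 0 < T ->
  r - a * b / T <= r * (ln r + ln T - ln a - ln b).
Proof.
move=> r_ge0 ra rb T_gt0; have [->|r_neq0] := eqVneq r 0.
  rewrite mul0r sub0r oppr_le0 divr_ge0 ?mulr_ge0 ?(ltW T_gt0) //.
  - exact: le_trans r_ge0 ra.
  - exact: le_trans r_ge0 rb.
have r_gt0 : 0 < r by rewrite lt_def r_neq0.
have a_gt0 : 0 < a := lt_le_trans r_gt0 ra.
have b_gt0 : 0 < b := lt_le_trans r_gt0 rb.
pose y := a * b / (r * T).
have y_gt0 : 0 < y by rewrite divr_gt0 ?mulr_gt0.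
have lny : ln y = ln a + ln b - ln r - ln T.
  by rewrite ln_div ?lnM ?posrE ?mulr_gt0 //; lra.
have : r * ln y <= r * (y - 1).
  by rewrite ler_pM2l // -[y in ln y](subrKC 1) le_ln1Dx //; lra.
have -> : r * (y - 1) = a * b / T - r by rewrite /y; field; rewrite gt_eqF.
rewrite lny; lra.
Qed.

Lemma sum_xlnx_le (I : finType) (x : I -> R) : (forall i, 0 <= x i) ->
  \sum_i xlnx (x i) <= xlnx (\sum_i x i).
Proof.
move=> x_ge0; rewrite /xlnx mulr_suml; apply: ler_sum => i _.
have [->|x_neq0] := eqVneq (x i) 0; first by rewrite !mul0r.
have x_gt0 : 0 < x i by rewrite lt_def x_neq0 x_ge0.
have sum_gt0 := lt_le_trans x_gt0 (le_sum_summand i x_ge0).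
by rewrite ler_pM2l // ler_ln ?posrE //; exact: le_sum_summand.
Qed.

(* Nonnegativity of mutual information, for an unnormalised joint law [r]. *)
Lemma xlnx_marginals_le (I J : finType) (r : I -> J -> R) :
  (forall i j, 0 <= r i j) ->
  \sum_i xlnx (\sum_j r i j) + \sum_j xlnx (\sum_i r i j) <=
  \sum_i \sum_j xlnx (r i j) + xlnx (\sum_i \sum_j r i j).
Proof.
move=> r_ge0.
pose a i := \sum_j r i j; pose b j := \sum_i r i j; pose T := \sum_i a i.
change (\sum_i xlnx (a i) + \sum_j xlnx (b j) <=
        \sum_i \sum_j xlnx (r i j) + xlnx T).
have sum_b : \sum_j b j = T by rewrite exchange_big.
have a_ge0 i : 0 <= a i by apply: sumr_ge0 => j _.
have [T0|T_neq0] := eqVneq T 0.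
  have a0 i : a i = 0 := psumr_eq0P (fun i _ => a_ge0 i) T0 isT.
  have r0 i j : r i j = 0 := psumr_eq0P (fun j _ => r_ge0 i j) (a0 i) isT.
  have b0 j : b j = 0 by apply: big1 => i _.
  have sum0 (K : finType) (f : K -> R) :
      (forall k, f k = 0) -> \sum_k xlnx (f k) = 0.
    by move=> f0; apply: big1 => k _; rewrite f0 xlnx0.
  have rsum0 : \sum_i \sum_j xlnx (r i j) = 0.
    by apply: big1 => i _; exact: sum0.
  by rewrite T0 xlnx0 (sum0 _ a a0) (sum0 _ b b0) rsum0 addr0.
have T_gt0 : 0 < T by rewrite lt_def T_neq0 sumr_ge0.
have gibbs : \sum_i \sum_j (r i j - a i * b j / T) <=
    \sum_i \sum_j r i j * (ln (r i j) + ln T - ln (a i) - ln (b j)).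
  apply: ler_sum => i _; apply: ler_sum => j _; apply: gibbs_term => //.
    exact: le_sum_summand.
  exact: (le_sum_summand i (r_ge0^~ j)).
have gap0 : \sum_i \sum_j (r i j - a i * b j / T) = 0.
  under eq_bigr do rewrite sumrB -mulr_suml -mulr_sumr sum_b mulfK //.
  by rewrite sumrB subrr.
have expand : \sum_i \sum_j r i j * (ln (r i j) + ln T - ln (a i) - ln (b j)) =
    \sum_i \sum_j xlnx (r i j) + xlnx T - \sum_i xlnx (a i) - \sum_j xlnx (b j).
  have lnT : \sum_i \sum_j r i j * ln T = xlnx T.
    by rewrite /xlnx mulr_suml; apply: eq_bigr => i _; rewrite mulr_suml.
  have lna : \sum_i \sum_j r i j * ln (a i) = \sum_i xlnx (a i).
    by apply: eq_bigr => i _; rewrite -mulr_suml.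
  have lnb : \sum_i \sum_j r i j * ln (b j) = \sum_j xlnx (b j).
    by rewrite exchange_big; apply: eq_bigr => j _; rewrite -mulr_suml.
  rewrite -lnT -lna -lnb -big_split -!sumrB /=; apply: eq_bigr => i _.
  rewrite -big_split -!sumrB /=; apply: eq_bigr => j _; rewrite /xlnx; ring.
move: gibbs; rewrite gap0 expand; lra.
Qed.

Lemma mutual_info_termE (p px py : R) : 0 <= p -> p <= px -> p <= py ->
  (if p == 0 then 0 else p * log2 (p / (px * py))) =
  (xlnx p - p * ln px - p * ln py) / ln 2.
Proof.
move=> p_ge0 ppx ppy; rewrite /xlnx; have [->|p_neq0] := eqVneq p 0.
  by rewrite !mul0r !subr0 mul0r.
have p_gt0 : 0 < p by rewrite lt_def p_neq0.
have px_gt0 := lt_le_trans p_gt0 ppx; have py_gt0 := lt_le_trans p_gt0 ppy.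
by rewrite /log2 ln_div ?lnM ?posrE ?mulr_gt0 //; ring.
Qed.

End XLnX.

Definition seq_excess {R : pzRingType} (H : nat -> R) (L : nat) : R :=
  H L - L%:R * (H L - H L.-1).

Definition seq_rate {R : realType} (H : nat -> R) : R :=
  limn (fun n => H n / n%:R).

Section ConcaveSequence.
Variables (R : realFieldType) (H : nat -> R).
Hypothesis H_concave : forall k, H k.+2 - H k.+1 <= H k.+1 - H k.
Local Notation incr k := (H k.+1 - H k).

Lemma incr_le i j : (i <= j)%N -> incr j <= incr i.
Proof.
move=> /subnKC <-; elim: (j - i)%N => [|k IH]; first by rewrite addn0.
by rewrite addnS (le_trans _ IH).
Qed.

Lemma sub_sum_incr m n : H (m + n) - H m = \sum_(k < n) incr (m + k).
Proof.
elim: n => [|n IH]; first by rewrite big_ord0 addn0 subrr.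
by rewrite big_ord_recr /= -IH addnS; lra.
Qed.

Lemma sub_ge_incr_last m n : n%:R * incr (m + n).-1 <= H (m + n) - H m.
Proof.
rewrite sub_sum_incr mulr_natl -[n in _ *+ n](card_ord n) -sumr_const.
by apply: ler_sum => k _; apply: incr_le; have := ltn_ord k; lia.
Qed.

Lemma sub_le_incr_first m n : H (m + n) - H m <= n%:R * incr m.
Proof.
rewrite sub_sum_incr mulr_natl -[n in _ *+ n](card_ord n) -sumr_const.
by apply: ler_sum => k _; apply: incr_le; lia.
Qed.

Lemma excess_double_ge m : 2 * H m - H (m + m) <= seq_excess H (m + m).
Proof.
rewrite /seq_excess; case: m => [|m]; first by rewrite mul0r subr0; lra.
have := sub_ge_incr_last m.+1 m.+1.
rewrite addSn /= -addSn natrD; lra.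
Qed.

Lemma excess_nondecreasing : nondecreasing_seq (seq_excess H).
Proof.
apply/nondecreasing_seqP; rewrite /seq_excess => -[|k] /=.
  by rewrite mul0r mul1r; lra.
have : 0 <= k.+1%:R * (incr k - incr k.+1).
  by rewrite mulr_ge0 // subr_ge0 H_concave.
rewrite -[k.+2]addn1 natrD; lra.
Qed.

End ConcaveSequence.

Section ConcaveSequenceRate.
Variables (R : realType) (H : nat -> R).
Hypotheses (H0 : H 0 = 0) (H_nondecr : forall k, H k <= H k.+1)
  (H_concave : forall k, H k.+2 - H k.+1 <= H k.+1 - H k).
Local Notation incr k := (H k.+1 - H k).

Lemma seq_ge0 n : 0 <= H n.
Proof.
by elim: n => [|n IH]; [rewrite H0 | exact: le_trans IH (H_nondecr n)].
Qed.

Lemma mean_nonincreasing : nonincreasing_seq (fun n => H n.+1 / n.+1%:R).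
Proof.
apply/nonincreasing_seqP => n; rewrite ler_pdivrMr // mulrAC ler_pdivlMr //.
have := sub_ge_incr_last H_concave 0 n.+1; rewrite H0 subr0 /=.
have : n.+1%:R * incr n.+1 <= n.+1%:R * incr n by rewrite ler_wpM2l.
rewrite -[n.+2]addn1 natrD; lra.
Qed.

Lemma rate_le_mean n : seq_rate H <= H n.+1 / n.+1%:R.
Proof.
have mean_cvg : cvgn (fun n => H n.+1 / n.+1%:R).
  apply: nonincreasing_is_cvgn; first exact: mean_nonincreasing.
  by exists 0 => _ [k _ <-]; rewrite divr_ge0 ?seq_ge0.
have -> : seq_rate H = limn (fun n => H n.+1 / n.+1%:R).
  by apply: cvg_lim => //; rewrite -cvg_shiftS.
exact: nonincreasing_cvgn_ge mean_nonincreasing mean_cvg n.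
Qed.

Lemma rate_le_incr p : seq_rate H <= incr p.
Proof.
rewrite -subr_le0.
apply: (le0_of_natmul_bounded (C := H p - p.+1%:R * seq_rate H + incr p)) => q.
have := rate_le_mean (p + q); rewrite ler_pdivlMr // -addnS.
have := sub_le_incr_first H_concave p q.+1.
rewrite !natrD -!natr1; lra.
Qed.

Lemma excess_le_series L :
  ((seq_excess H L)%:E <= \sum_(1 <= k <oo) ((H k - H k.-1 - seq_rate H)%:E))%E.
Proof.
apply: le_trans (nneseries_lim_ge L.+1 _); last first.
  by move=> [|k] _ //; rewrite lee_fin subr_ge0 rate_le_incr.
rewrite sumEFin lee_fin big_add1 big_mkord /= sumrB sumr_const card_ord.
rewrite -[X in X - _](sub_sum_incr H 0 L) H0 subr0 -mulr_natl /seq_excess.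
have : L%:R * seq_rate H <= L%:R * (H L - H L.-1).
  by case: L => [|L]; rewrite ?mul0r // ler_wpM2l // rate_le_incr.
lra.
Qed.

End ConcaveSequenceRate.

Section StationaryProcess.
Variables (R : realType) (A : finType) (P : seq A -> R).
Hypothesis hP : stationary_process P.

Let P_ge0 w : 0 <= P w. Proof. by case: hP. Qed.
Let P_nil : P [::] = 1. Proof. by case: hP. Qed.
Let P_rcons w : P w = \sum_(a : A) P (rcons w a). Proof. by case: hP. Qed.
Let P_cons w : P w = \sum_(a : A) P (a :: w). Proof. by case: hP. Qed.

Lemma sum_suffixes m x : \sum_(y : m.-tuple A) P (x ++ y) = P x.
Proof.
rewrite -/(tuple_sum m (fun y => P (x ++ y))).
elim: m => [|m IH]; first by rewrite tuple_sum0 cats0.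
rewrite tuple_sum_rcons -[RHS]IH; apply: eq_bigr => y _.
by rewrite P_rcons; apply: eq_bigr => a _; rewrite rcons_cat.
Qed.

Lemma sum_prefixes m y : \sum_(x : m.-tuple A) P (x ++ y) = P y.
Proof.
rewrite -/(tuple_sum m (fun x => P (x ++ y))).
elim: m => [|m IH]; first by rewrite tuple_sum0.
rewrite tuple_sum_cons -[RHS]IH exchange_big.
by apply: eq_bigr => x _; rewrite P_cons.
Qed.

Let neg_entropy n := tuple_sum n (fun w => xlnx (P w)).

Let block_entropyE n : block_entropy P n = - neg_entropy n / ln 2.
Proof.
rewrite /block_entropy /neg_entropy /tuple_sum mulNr mulr_suml; congr (- _).
apply: eq_bigr => w _; rewrite /xlog2x /log2 /xlnx.
by case: eqP => [->|_]; rewrite ?mul0r ?mulrA.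
Qed.

Let ln2_gt0 : 0 < ln (2 : R). Proof. by rewrite ln_gt0 // ltr1n. Qed.

Lemma block_entropy0 : block_entropy P 0 = 0.
Proof.
rewrite block_entropyE /neg_entropy tuple_sum0 P_nil.
by rewrite /xlnx ln1 mulr0 oppr0 mul0r.
Qed.

Lemma block_entropy_nondecreasing k : block_entropy P k <= block_entropy P k.+1.
Proof.
rewrite !block_entropyE ler_pM2r ?invr_gt0 // lerN2.
rewrite /neg_entropy tuple_sum_rcons.
by apply: ler_sum => w _; rewrite P_rcons sum_xlnx_le.
Qed.

Lemma block_entropy_concave k :
  block_entropy P k.+2 - block_entropy P k.+1 <=
  block_entropy P k.+1 - block_entropy P k.
Proof.
rewrite !block_entropyE -!mulrBl ler_pM2r ?invr_gt0 //.
suff : neg_entropy k.+1 + neg_entropy k.+1 <= neg_entropy k.+2 + neg_entropy k.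
  by lra.
have via_cons : neg_entropy k.+1 =
    tuple_sum k (fun u => \sum_a xlnx (P (a :: u))).
  by rewrite /neg_entropy tuple_sum_cons /tuple_sum exchange_big.
have via_rcons : neg_entropy k.+1 =
    tuple_sum k (fun u => \sum_b xlnx (P (rcons u b))).
  exact: tuple_sum_rcons.
have via_both : neg_entropy k.+2 =
    tuple_sum k (fun u => \sum_a \sum_b xlnx (P (a :: rcons u b))).
  rewrite /neg_entropy tuple_sum_cons [in RHS]/tuple_sum [RHS]exchange_big.
  by apply: eq_bigr => a _; rewrite tuple_sum_rcons.
rewrite {1}via_cons via_rcons via_both /neg_entropy -!tuple_sumD.
apply: ler_sum => u _.
have row a : \sum_b P (a :: rcons u b) = P (a :: u) by rewrite [RHS]P_rcons.
have col b : \sum_a P (a :: rcons u b) = P (rcons u b) by rewrite [RHS]P_cons.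
have total : \sum_a \sum_b P (a :: rcons u b) = P u.
  by rewrite [RHS]P_cons; apply: eq_bigr => a _; rewrite row.
have := xlnx_marginals_le (fun a b => P_ge0 (a :: rcons u b)).
by rewrite total (eq_bigr _ (fun a _ => congr1 (@xlnx R) (row a)))
  (eq_bigr _ (fun b _ => congr1 (@xlnx R) (col b))).
Qed.

Lemma le_prefix x y : P (x ++ y) <= P x.
Proof.
rewrite -(sum_suffixes (size y) x).
exact: (le_sum_summand (in_tuple y) (fun y' => P_ge0 (x ++ y'))).
Qed.

Lemma le_suffix x y : P (x ++ y) <= P y.
Proof.
rewrite -(sum_prefixes (size x) y).
exact: (le_sum_summand (in_tuple x) (fun x' => P_ge0 (x' ++ y))).
Qed.

Lemma halves_mutual_infoE m :
  halves_mutual_info P m = 2 * block_entropy P m - block_entropy P (m + m).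
Proof.
transitivity ((neg_entropy (m + m) - neg_entropy m - neg_entropy m) / ln 2).
  have -> : neg_entropy (m + m) - neg_entropy m - neg_entropy m =
      \sum_(x : m.-tuple A) \sum_(y : m.-tuple A)
        (xlnx (P (x ++ y)) - P (x ++ y) * ln (P x) - P (x ++ y) * ln (P y)).
    under eq_bigr do rewrite !sumrB -mulr_suml sum_suffixes.
    rewrite !sumrB /neg_entropy tuple_sum_cat; congr (_ - _ - _).
    rewrite exchange_big; apply: eq_bigr => y _.
    by rewrite -mulr_suml sum_prefixes.
  rewrite mulr_suml; apply: eq_bigr => x _.
  rewrite mulr_suml; apply: eq_bigr => y _ /=.
  by rewrite sum_suffixes sum_prefixes mutual_info_termE ?le_prefix ?le_suffix.
by rewrite !block_entropyE; field; rewrite gt_eqF.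
Qed.

End StationaryProcess.

Lemma excess_entropy'_LE (R : realType) (A : finType) (P : seq A -> R) L :
  excess_entropy'_L P L = halves_mutual_info P L./2.
Proof.
rewrite /excess_entropy'_L; case: ifP => // odd_L.
by congr halves_mutual_info; rewrite -!divn2; have := odd_gt0 odd_L; lia.
Qed.

Theorem lemma3 (R : realType) (A : finType) (P : seq A -> R)
  (hP : stationary_process P) (L : nat) (hL : (2 <= L)%N) :
  excess_entropy'_L P L <= excess_entropy_L P L /\
  ((excess_entropy_L P L)%:E <= excess_entropy P)%E.
Proof.
(* Both inequalities hold for every L. *)
have H0 := block_entropy0 hP.
have H_nondecr := block_entropy_nondecreasing hP.
have H_concave := block_entropy_concave hP.
split; last exact: (excess_le_series (H := block_entropy P) H0 H_nondecr
                                        H_concave).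
rewrite excess_entropy'_LE (halves_mutual_infoE hP).
apply: le_trans (excess_double_ge H_concave _) _.
by apply: (excess_nondecreasing H_concave); rewrite -divn2; lia.
Qed.
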